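(* Let $p\ge 2$, let $E_1,\dots,E_p$ be Banach spaces, $I$ a finite set, and for $k=1,\dots,p$ let $(d_i(k))_{i\in I}$ be elements of $E_k$ with $f_k=\sum_{i\in I}d_i(k)$. Let $(\varepsilon_i)_{i\in I}$ be independent random variables with $P(\varepsilon_i=1)=P(\varepsilon_i=-1)=1/2$ and put $S_k=\big(\mathbb E\|\sum_{i\in I}\varepsilon_id_i(k)\|^p\big)^{1/p}$. Then, in $E_1\widehat\otimes\cdots\widehat\otimes E_p$, $$\Big\|f_1\otimes\cdots\otimes f_p-\sum_{g\colon\{1,\dots,p\}\to I\ \text{injective}}d_{g(1)}(1)\otimes\cdots\otimes d_{g(p)}(p)\Big\|_\wedge\le\sum_{A\subset\{1,\dots,p\},\ |A|\le p-2}\ \prod_{k\in A}\|f_k\|\cdot\prod_{k\notin A}S_k\cdot(p-|A|)!\,.$$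
   Context: $E_1\widehat\otimes\cdots\widehat\otimes E_p$ denotes the projective tensor product of Banach spaces, with projective norm $\|\cdot\|_\wedge$. *)

From HB Require Import structures.
From mathcomp Require Import all_boot all_order all_algebra.
From mathcomp Require Import all_classical all_reals all_analysis.
Set Implicit Arguments. Unset Strict Implicit. Unset Printing Implicit Defensive.
Import Order.TTheory GRing.Theory Num.Theory.
Import numFieldNormedType.Exports.
Local Open Scope classical_set_scope.
Local Open Scope ring_scope.

Section ProjTensor.
Variables (R : realType) (p : nat) (E : 'I_p -> completeNormedModType R).

(* an elementary tensor x_1 (x) ... (x) x_p is given by the tuple of its factors *)
Definition etuple := forall k : 'I_p, E k.

Definition multilinear (phi : etuple -> R) : Prop :=
  forall (k : 'I_p) (x y z : etuple) (a : R),
    (forall j : 'I_p, j != k -> x j = z j /\ y j = z j) ->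
    z k = a *: x k + y k ->
    phi z = a * phi x + phi y.

(* a formal combination sum_j c_j (x_j^1 (x) ... (x) x_j^p) *)
Definition tcomb := seq (R * etuple).

(* two formal combinations define the same element of the algebraic tensor
   product E_1 (x) ... (x) E_p  (universal property: they agree on every
   p-linear form) *)
Definition tensor_eq (u v : tcomb) : Prop :=
  forall phi, multilinear phi ->
    \sum_(x <- u) x.1 * phi x.2 = \sum_(x <- v) x.1 * phi x.2.

(* projective norm: inf of sum_j prod_k ||x_j^k|| over all representations
   u = sum_j x_j^1 (x) ... (x) x_j^p.  For an element of the algebraic tensor
   product this coincides with its norm in the completed projective tensor
   product E_1 ^(x) ... ^(x) E_p. *)
Definition projnorm (u : tcomb) : R :=
  inf [set r : R | exists s : seq etuple,
         tensor_eq u [seq (1, t) | t <- s] /\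
         r = \sum_(t <- s) \prod_(k < p) `|t k|].

End ProjTensor.

Definition rsign (R : realType) (b : bool) : R := if b then 1 else -1.

(* (E || sum_i eps_i x_i ||^q)^(1/q) for independent symmetric +-1 variables
   eps_i, i in I: the joint law of (eps_i) is uniform on {-1,1}^I. *)
Definition rad_moment (R : realType) (V : normedModType R) (I : finType)
  (x : I -> V) (q : nat) : R :=
  ((#|{ffun I -> bool}|%:R)^-1 *
     \sum_(eps : {ffun I -> bool}) `|\sum_(i : I) rsign R (eps i) *: x i| ^+ q)
  `^ (q%:R^-1).

From HB Require Import structures.
From mathcomp Require Import all_boot all_order all_algebra all_fingroup.
From mathcomp Require Import all_classical all_reals all_analysis.
From mathcomp Require Import zify.
Import Order.TTheory GRing.Theory Num.Theory.
Import numFieldNormedType.Exports.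
Local Open Scope ring_scope.

(* Give every coordinate k an independent uniform sign vector eta_k in {-1,1}^I.
   For a permutation s of the coordinates, the mean over eta of the elementary
   tensor (x)_k sum_i eta_k(i) eta_(s^-1 k)(i) d_i(k) is the sum of
   d_g(1)(1) (x) ... (x) d_g(p)(p) over the g with g o s = g.  Since
   sum_s sgn(s) [g o s = g] = [g injective], the tensor to be estimated is the
   mean over eta of - sum_(s <> 1) sgn(s) times these elementary tensors.
   In the tensor of s a fixed point k contributes f_k, while at a moved point
   the products eta_k(i) eta_(s^-1 k)(i) are again independent uniform signs,
   so Hoelder's inequality bounds the mean cost of the tensor of s by
   prod_(k fixed) ||f_k|| * prod_(k moved) S_k.  Finally s <> 1 moves at least
   two points, and at most (p - |A|)! permutations have fixed-point set A. *)

Section Multilinear.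
Context {R : realType} {p : nat} {E : 'I_p -> completeNormedModType R}.
Context {phi : etuple E -> R} (phi_ml : multilinear phi).

Lemma multilinear_dfwithD (z : etuple E) k (a : R) (x y : E k) :
  phi (dfwith z k (a *: x + y)) = a * phi (dfwith z k x) + phi (dfwith z k y).
Proof.
apply: (phi_ml k); last by rewrite !dfwithin.
by move=> j jk; rewrite !dfwithout // eq_sym.
Qed.

Lemma multilinear_dfwith0 (z : etuple E) k : phi (dfwith z k 0) = 0.
Proof.
have := multilinear_dfwithD z k 1 0 0.
by rewrite scale1r addr0 mul1r -[LHS]addr0 => /addrI.
Qed.

Lemma multilinear_dfwith_sum (T : Type) (r : seq T) (z : etuple E) k
    (a : T -> R) (x : T -> E k) :
  phi (dfwith z k (\sum_(t <- r) a t *: x t)) =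
  \sum_(t <- r) a t * phi (dfwith z k (x t)).
Proof.
elim: r => [|t r IHr]; first by rewrite !big_nil multilinear_dfwith0.
by rewrite !big_cons multilinear_dfwithD IHr.
Qed.

End Multilinear.

Lemma projnorm_le {R : realType} {p : nat} {E : 'I_p -> completeNormedModType R}
    {u : tcomb E} {s : seq (etuple E)} :
  tensor_eq u [seq (1, t) | t <- s] -> projnorm u <= \sum_(t <- s) \prod_k `|t k|.
Proof.
move=> us; apply: ge_inf; last by exists s.
by exists 0 => _ [s' [_ ->]]; rewrite sumr_ge0 // => t _; rewrite prodr_ge0.
Qed.

Definition ffun_upd (p : nat) (I : finType) (g : {ffun 'I_p -> I}) (k0 : 'I_p) (i : I) :
  {ffun 'I_p -> I} := [ffun k => if k == k0 then i else g k].
Arguments ffun_upd {p I}.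

Definition splice (p : nat) (T : 'I_p -> Type) (m : nat) (x y : forall k, T k) :
  forall k, T k := fun k => if (k < m)%N then x k else y k.
Arguments splice {p T}.

Section Splice.
Context {p : nat} {T : 'I_p -> Type} (m : nat) (km : 'I_p).
Hypothesis km_m : val km = m.

Lemma spliceS (x y : forall k, T k) :
  splice m.+1 x y = dfwith (splice m x y) km (x km).
Proof.
apply: functional_extensionality_dep => k; case: dfwithP => [|j /eqP jkm].
  by rewrite /splice km_m ltnSn.
rewrite /splice ltnS leq_eqVlt; case: eqP => // jm.
by case: jkm; apply: val_inj; rewrite km_m.
Qed.

Lemma dfwith_splice (x y : forall k, T k) (a : T km) :
  dfwith (splice m x y) km a = splice m x (dfwith y km a).
Proof.
apply: functional_extensionality_dep => k; case: dfwithP => [|j jkm].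
  by rewrite /splice km_m ltnn dfwithin.
by rewrite /splice; case: ifP => // _; rewrite dfwithout // eq_sym.
Qed.

Lemma eq_splice (x x' y : forall k, T k) :
  (forall k : 'I_p, (k < m)%N -> x k = x' k) -> splice m x y = splice m x' y.
Proof.
by move=> xx'; apply: functional_extensionality_dep => k; rewrite /splice; case: ifP => // /xx'.
Qed.

End Splice.

Section FixedTail.
Context {p : nat} {I : finType} (i0 : I).

(* In the coordinatewise expansion, the indices of the coordinates not yet
   expanded are pinned to an arbitrary i0. *)
Definition fixed_from (m : nat) (g : {ffun 'I_p -> I}) :=
  [forall k : 'I_p, (m <= k)%N ==> (g k == i0)].

Lemma fixed_fromS m (km : 'I_p) g : val km = m ->
  fixed_from m g = fixed_from m.+1 g && (g km == i0).
Proof.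
move=> km_m; apply/forallP/andP => [gm|[/forallP gm1 gkm] k].
  split; last by have := gm km; rewrite km_m leqnn.
  by apply/forallP => k; apply/implyP => /ltnW; apply/implyP/gm.
apply/implyP; rewrite leq_eqVlt => /orP[/eqP mk|]; last by apply/implyP/gm1.
by have -> : k = km by apply: val_inj; rewrite km_m.
Qed.

Lemma fixed_from_upd m (km : 'I_p) g i : val km = m ->
  fixed_from m.+1 (ffun_upd g km i) = fixed_from m.+1 g.
Proof.
move=> km_m; apply: eq_forallb => k; rewrite ffunE.
by have [->|//] := eqVneq k km; rewrite km_m ltnn.
Qed.

Lemma sum_fixed_fromS (R : nmodType) m (km : 'I_p) (F : {ffun 'I_p -> I} -> R) :
  val km = m ->
  \sum_(g | fixed_from m.+1 g) F g =
  \sum_i \sum_(g | fixed_from m g) F (ffun_upd g km i).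
Proof.
move=> km_m; rewrite (partition_big (fun g : {ffun 'I_p -> I} => g km) xpredT) //=.
apply: eq_bigr => i _.
have updK h j : ffun_upd (ffun_upd h km j) km i0 = ffun_upd h km i0.
  by apply/ffunP => k; rewrite !ffunE; case: eqP.
rewrite (reindex_onto (fun h => ffun_upd h km i) (fun g => ffun_upd g km i0)); last first.
  by move=> g /andP[_ /eqP gi]; apply/ffunP => k; rewrite !ffunE; case: eqP => // ->.
apply: eq_bigl => h.
rewrite fixed_from_upd // ffunE eqxx updK (fixed_fromS _ _ _ km_m) eqxx andbT.
congr (_ && _); apply/eqP/eqP => [<-|hkm]; first by rewrite ffunE eqxx.
by apply/ffunP => k; rewrite ffunE; case: eqP => // ->.
Qed.

End FixedTail.

Section Expansion.
Context {R : realType} {p : nat} {E : 'I_p -> completeNormedModType R}.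
Context {phi : etuple E -> R} (phi_ml : multilinear phi).
Context {I : finType} (c : 'I_p -> I -> R) (v : forall k, I -> E k).

Let lin_comb : etuple E := fun k => \sum_i c k i *: v k i.

Lemma multilinear_expand_prefix (i0 : I) m : (m <= p)%N -> forall w : etuple E,
  phi (splice m lin_comb w) =
  \sum_(g | fixed_from i0 m g)
     (\prod_(k : 'I_p | (k < m)%N) c k (g k)) * phi (splice m (fun k => v k (g k)) w).
Proof.
elim: m => [_ w|m IHm lt_mp w].
  rewrite (big_pred1 [ffun=> i0]); last first.
    move=> g; apply/forallP/eqP => [gi0|->]; last by move=> k; rewrite ffunE eqxx.
    by apply/ffunP => k; rewrite ffunE; apply/eqP/gi0.
  by rewrite big_pred0 // mul1r.
pose km := Ordinal lt_mp.
rewrite (spliceS _ _ (erefl : val km = m)) multilinear_dfwith_sum //.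
under eq_bigr => i _ do
  rewrite (dfwith_splice _ _ (erefl : val km = m)) (IHm (ltnW lt_mp)) mulr_sumr.
rewrite (sum_fixed_fromS _ _ _ _ _ (erefl : val km = m)); apply: eq_bigr => i _.
apply: eq_bigr => g _; rewrite mulrA; congr (_ * phi _).
- rewrite [RHS](bigD1 km) /= ?ltnSn // ffunE eqxx; congr (_ * _).
  apply: eq_big => [k|k k_lt]; last first.
    by rewrite ffunE; case: eqP => // kkm; rewrite kkm ltnn in k_lt.
  have [->|kkm] := eqVneq k km; first by rewrite andbF ltnn.
  rewrite andbT [RHS]ltnS [RHS]leq_eqVlt orb_idl // => /eqP k_m.
  by case/eqP: kkm; apply: val_inj.
- rewrite (spliceS _ _ (erefl : val km = m)) ffunE eqxx dfwith_splice //.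
  apply: eq_splice => k k_lt; rewrite ffunE.
  by case: eqP => // kkm; rewrite kkm ltnn in k_lt.
Qed.

Lemma multilinear_expand : (0 < p)%N ->
  phi lin_comb = \sum_(g : {ffun 'I_p -> I}) (\prod_k c k (g k)) * phi (fun k => v k (g k)).
Proof.
move=> p_gt0; have [i0 _|I0] := pickP (@predT I).
  have := multilinear_expand_prefix i0 _ (leqnn p) lin_comb.
  have spliceT (x y : etuple E) : splice p x y = x.
    by apply: functional_extensionality_dep => k; rewrite /splice ltn_ord.
  rewrite !spliceT => ->; apply: eq_big => [g|g _].
    by apply/forallP => k; rewrite leqNgt ltn_ord.
  by rewrite spliceT; congr (_ * _); apply: (eq_bigl _ _ (fun k => ltn_ord k)).
pose k0 := Ordinal p_gt0.
rewrite big_pred0; last by move=> g; have := I0 (g k0).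
have -> : lin_comb = dfwith lin_comb k0 0.
  by apply: functional_extensionality_dep => k; case: dfwithP => //; rewrite /lin_comb big_pred0.
exact: multilinear_dfwith0.
Qed.

End Expansion.

Lemma card_setC_ord n (A : {set 'I_n}) : #|~: A| = (n - #|A|)%N.
Proof. by rewrite cardsCs finset.setCK card_ord. Qed.

Lemma sum_sign_perm_invariant (R : numDomainType) {T I : finType} (g : T -> I) :
  \sum_(s : {perm T} | [forall j, g (s j) == g j]) (-1) ^+ odd_perm s =
  (injectiveb g)%:R :> R.
Proof.
have [/injectiveP g_inj|/injectivePn[a [b ab gab]]] := boolP (injectiveb g).
  rewrite (big_pred1 1%g) ?odd_perm1 // => s /=; apply/forallP/eqP => [gs|->]; last first.
    by move=> j; rewrite perm1.
  by apply/permP => j; rewrite perm1; apply/g_inj/eqP.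
have g_tperm j : g (tperm a b j) = g j by case: tpermP => [->|->|]; rewrite ?gab.
set X := \sum_(s | _) _; suff: X *+ 2 = 0 by move/eqP; rewrite mulrn_eq0 => /eqP.
apply/eqP; rewrite mulr2n addr_eq0; apply/eqP.
rewrite {1}/X (reindex_inj (mulIg (tperm a b))) /= -sumrN.
apply: eq_big => [s|s _]; last by rewrite odd_permM odd_tperm ab signr_addb mulrN1.
by apply: eq_forallb => j; rewrite permM g_tperm.
Qed.

Definition fixset {T : finType} (s : {perm T}) : {set T} := [set k | s k == k].

Lemma card_perm_fixset {T : finType} (A : {set T}) :
  (#|[pred s : {perm T} | fixset s == A]| <= (#|~: A|)`!)%N.
Proof.
rewrite -card_perm; apply: subset_leq_card; apply/fintype.subsetP => s /eqP fixA.
by apply/fintype.subsetP => k; rewrite !inE -fixA inE.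
Qed.

Lemma card_fixset_nontrivial {T : finType} (s : {perm T}) :
  s != 1%g -> (#|fixset s| <= #|T| - 2)%N.
Proof.
move=> s_neq1; have [k sk] : exists k, s k != k.
  apply/existsP; apply: contraR s_neq1 => /existsPn s_id.
  by apply/eqP/permP => k; rewrite perm1; apply/eqP/negPn/s_id.
have ssk : s (s k) != s k by apply: contra sk => /eqP/perm_inj ->.
have : [set k; s k] \subset ~: fixset s.
  by apply/fintype.subsetP => j; rewrite !inE => /orP[]/eqP->; rewrite ?sk ?ssk.
move/subset_leq_card; rewrite cards2 eq_sym sk cardsCs finset.setCK; lia.
Qed.

Lemma sum_nontrivial_perm_fixset {R : numDomainType} {n} (P : {set 'I_n} -> R) :
  (forall A, 0 <= P A) ->
  \sum_(s : {perm 'I_n} | s != 1%g) P (fixset s) <=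
  \sum_(A : {set 'I_n} | (#|A| <= n - 2)%N) P A * ((n - #|A|)`!)%:R.
Proof.
move=> P_ge0; rewrite (partition_big (@fixset _) (fun A => #|A| <= n - 2)%N) /=; last first.
  by move=> s /card_fixset_nontrivial; rewrite card_ord.
apply: ler_sum => A _; rewrite (eq_bigr (fun=> P A)); last by move=> s /andP[_ /eqP->].
rewrite sumr_const -[P A *+ _]mulr_natr ler_wpM2l // ler_nat.
rewrite -card_setC_ord.
apply: (@leq_trans #|[pred s : {perm 'I_n} | fixset s == A]|); last exact: card_perm_fixset.
by apply/subset_leq_card/fintype.subsetP => s /andP[].
Qed.

Lemma prod_le_AGM_pad (R : realType) n (B : {set 'I_n}) (x : 'I_n -> R) : (0 < n)%N ->
  (forall k, k \in B -> 0 <= x k) ->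
  \prod_(k in B) x k <= n%:R^-1 * (\sum_(k in B) x k ^+ n + (n - #|B|)%:R).
Proof.
move=> n_gt0 x_ge0; pose y k := if k \in B then x k ^+ n else 1.
have y_ge0 : {in predT, forall k, 0 <= y k}.
  by move=> k _; rewrite /y; case: ifP => // /x_ge0 /exprn_ge0->.
have prod_y : \prod_(k in predT) y k = (\prod_(k in B) x k) ^+ n.
  rewrite -prodrXl (bigID (mem B)) /= [X in _ * X]big1 ?mulr1; last first.
    by move=> k /negbTE kB; rewrite /y kB.
  by apply: eq_bigr => k kB; rewrite /y kB.
have sum_y : \sum_(k in predT) y k = \sum_(k in B) x k ^+ n + (n - #|B|)%:R.
  rewrite (bigID (mem B)) /=; congr (_ + _); first by apply: eq_bigr => k kB; rewrite /y kB.
  rewrite (eq_bigr (fun=> 1)); last by move=> k /negbTE kB; rewrite /y kB.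
  rewrite -card_setC_ord (eq_bigl (mem (~: B))) ?sumr_const // => k.
  by rewrite !inE.
have := (leif_AGM y_ge0).1; rewrite card_ord prod_y sum_y mulrC => AGM.
rewrite -(ler_pXn2r n_gt0) ?nnegrE ?prodr_ge0 // ?AGM //.
apply: mulr_ge0; rewrite ?invr_ge0 // addr_ge0 // sumr_ge0 // => k /x_ge0.
exact: exprn_ge0.
Qed.

Section Hoelder.
Variables (R : realType) (n : nat) (T : finType) (B : {set 'I_n}).
Variables (h : 'I_n -> T -> R) (S : 'I_n -> R).
Hypotheses (n_gt0 : (0 < n)%N) (T_gt0 : (0 < #|T|)%N).
Hypotheses (h_ge0 : forall k t, 0 <= h k t) (S_ge0 : forall k, 0 <= S k).
Hypothesis h_moment : forall k, k \in B -> #|T|%:R^-1 * \sum_t h k t ^+ n = S k ^+ n.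

Let T_neq0 : #|T|%:R != 0 :> R. Proof. by rewrite pnatr_eq0 -lt0n. Qed.

Let sum_pow_moment k : k \in B -> \sum_t h k t ^+ n = #|T|%:R * S k ^+ n.
Proof. by move/h_moment <-; rewrite mulVKf. Qed.

Let hoelder_degenerate k : k \in B -> S k = 0 ->
  #|T|%:R^-1 * \sum_t \prod_(j in B) h j t <= \prod_(j in B) S j.
Proof.
move=> kB Sk0; have hk0 t : h k t = 0.
  have /eqP := sum_pow_moment k kB; rewrite Sk0 expr0n gtn_eqF // mulr0 psumr_eq0.
    by move=> /allP/(_ t (mem_index_enum t)); rewrite expf_eq0 n_gt0 => /eqP.
  by move=> ? _; apply: exprn_ge0.
rewrite big1 ?mulr0 ?prodr_ge0 // => t _.
by rewrite (bigD1 k) //= hk0 mul0r.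
Qed.

Lemma mean_prod_le_prod_moments :
  #|T|%:R^-1 * \sum_t \prod_(k in B) h k t <= \prod_(k in B) S k.
Proof.
have [/existsP[k /andP[kB /eqP Sk0]]|/existsPn S_neq0] :=
  boolP [exists k, (k \in B) && (S k == 0)]; first exact: hoelder_degenerate kB Sk0.
have S_gt0 k : k \in B -> 0 < S k.
  by move=> kB; rewrite lt_def S_ge0 andbT; have := S_neq0 k; rewrite kB.
(* AM-GM for the normalised factors h k t / S k at each t; each has mean n-th power 1. *)
pose AGM t := n%:R^-1 * (\sum_(k in B) (h k t / S k) ^+ n + (n - #|B|)%:R).
have prod_le t : \prod_(k in B) h k t <= \prod_(k in B) S k * AGM t.
  rewrite [X in X <= _](eq_bigr (fun k => S k * (h k t / S k))); last first.
    by move=> k kB; rewrite mulrC divfK // gt_eqF // S_gt0.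
  rewrite big_split ler_wpM2l ?prodr_ge0 // prod_le_AGM_pad // => k kB.
  by rewrite divr_ge0.
have sum_AGM : \sum_t AGM t = #|T|%:R.
  rewrite -mulr_sumr big_split /= exchange_big /= sumr_const cardT -cardE.
  rewrite (eq_bigr (fun=> #|T|%:R)) => [|k kB]; last first.
    under eq_bigr do rewrite expr_div_n; rewrite -mulr_suml sum_pow_moment //.
    by rewrite mulfK // expf_neq0 // gt_eqF // S_gt0.
  have B_le_n : (#|B| <= n)%N by have := max_card (mem B); rewrite card_ord.
  rewrite sumr_const -!mulrnA -mulrnDr [((_ - _) * _)%N]mulnC -mulnDr subnKC //.
  by rewrite natrM mulrC mulfK // pnatr_eq0 -lt0n.
apply: le_trans (_ : #|T|%:R^-1 * \sum_t (\prod_(k in B) S k * AGM t) <= _).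
  by rewrite ler_wpM2l ?invr_ge0 // ler_sum.
by rewrite -mulr_sumr sum_AGM mulrCA mulVf ?mulr1.
Qed.

End Hoelder.

Lemma rsignM (R : realType) a b : rsign R a * rsign R b = rsign R (a == b).
Proof. by case: a; case: b; rewrite /rsign ?mulr1 ?mulrN1 ?opprK. Qed.

Lemma sum_rsign_pair (R : realType) (I : finType) (a b : I) :
  \sum_(e : {ffun I -> bool}) rsign R (e a) * rsign R (e b) =
  if a == b then #|{ffun I -> bool}|%:R else 0.
Proof.
have [->|ab] := eqVneq a b.
  by rewrite (eq_bigr (fun=> 1)) ?sumr_const // => e _; rewrite rsignM eqxx.
pose flip (e : {ffun I -> bool}) := [ffun i => if i == a then ~~ e i else e i].
have flipK : involutive flip.
  by move=> e; apply/ffunP => i; rewrite !ffunE; case: eqP; rewrite ?negbK.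
set X := \sum_e _; suff: X *+ 2 = 0 by move/eqP; rewrite mulrn_eq0 => /eqP.
apply/eqP; rewrite mulr2n addr_eq0; apply/eqP.
rewrite {1}/X (reindex_inj (can_inj flipK)) /= -sumrN; apply: eq_bigr => e _.
by rewrite !ffunE eqxx eq_sym (negbTE ab); case: (e a); rewrite /rsign ?mulN1r ?mul1r ?opprK.
Qed.

Lemma sum_prod_rsign_pairs (R : realType) n (I : finType) (q r : 'I_n -> I) :
  \sum_(eta : {ffun 'I_n -> {ffun I -> bool}})
     \prod_j (rsign R (eta j (q j)) * rsign R (eta j (r j))) =
  if [forall j, q j == r j] then #|{ffun I -> bool}|%:R ^+ n else 0.
Proof.
rewrite -(bigA_distr_bigA (fun j (e : {ffun I -> bool}) =>
  rsign R (e (q j)) * rsign R (e (r j)))) /=.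
under eq_bigr do rewrite sum_rsign_pair.
case: (boolP [forall j, q j == r j]) => [/forallP qr|/forallPn[j /negbTE qrj]].
  by rewrite (eq_bigr (fun=> #|{ffun I -> bool}|%:R)) ?prodr_const ?card_ord // => j _; rewrite qr.
by rewrite (bigD1 j) //= qrj mul0r.
Qed.

(* Coordinatewise, the product of two independent uniform sign vectors is
   again uniform and independent of all the other coordinates. *)
Lemma sum_ffun_xnor {R : realType} {n} {I : finType} {k j : 'I_n}
    (G : {ffun I -> bool} -> R) : j != k ->
  \sum_(eta : {ffun 'I_n -> {ffun I -> bool}}) G [ffun i => eta k i == eta j i] =
  (\sum_e G e) * #|{ffun I -> bool}|%:R ^+ n.-1.
Proof.
move=> jk; pose tau (eta : {ffun 'I_n -> {ffun I -> bool}}) :=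
  [ffun l => if l == k then [ffun i => eta k i == eta j i] else eta l].
have tauK : involutive tau.
  move=> eta; apply/ffunP => l; rewrite !ffunE; case: eqP => [->|//].
  by apply/ffunP => i; rewrite !ffunE eqxx (negbTE jk) !ffunE; case: (eta k i); case: (eta j i).
rewrite (reindex_inj (can_inj tauK)) /=.
have tau_xnor eta : [ffun i => tau eta k i == tau eta j i] = eta k.
  by apply/ffunP => i; rewrite !ffunE eqxx (negbTE jk) !ffunE; case: (eta k i); case: (eta j i).
have G_prod (eta : {ffun 'I_n -> {ffun I -> bool}}) :
    G (eta k) = \prod_l (if l == k then G (eta l) else 1).
  by rewrite (bigD1 k) //= eqxx big1 ?mulr1 // => l /negbTE->.
under eq_bigr => eta _ do rewrite tau_xnor G_prod.
rewrite -(bigA_distr_bigA (fun l e => if l == k then G e else 1)) /= (bigD1 k) //= eqxx.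
rewrite [X in _ * X](eq_bigr (fun=> #|{ffun I -> bool}|%:R)); last first.
  by move=> l /negbTE->; rewrite sumr_const.
by rewrite prodr_const cardC1 card_ord.
Qed.

Lemma rad_moment_ge0 (R : realType) (V : normedModType R) (I : finType) (x : I -> V) q :
  0 <= rad_moment x q.
Proof. exact: powR_ge0. Qed.

Lemma rad_momentXn (R : realType) (V : normedModType R) (I : finType) (x : I -> V) q :
  (0 < q)%N -> rad_moment x q ^+ q =
  #|{ffun I -> bool}|%:R^-1 *
    \sum_(eps : {ffun I -> bool}) `|\sum_i rsign R (eps i) *: x i| ^+ q.
Proof.
move=> q_gt0; rewrite /rad_moment -powR_mulrn ?powR_ge0 // -powRrM mulVf ?powRr1 //.
  by rewrite mulr_ge0 ?invr_ge0 ?sumr_ge0 // => eps _; apply: exprn_ge0.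
by rewrite pnatr_eq0 -lt0n.
Qed.

Section RademacherRepresentation.
Context {R : realType} {p : nat} {E : 'I_p -> completeNormedModType R}.
Context {I : finType} (d : forall k : 'I_p, I -> E k) (p_ge2 : (2 <= p)%N).

Let p_gt0 : (0 < p)%N := ltnW p_ge2.
Let k0 : 'I_p := Ordinal p_gt0.
Let M : R := #|{ffun I -> bool}|%:R.
Let N : R := #|{ffun 'I_p -> {ffun I -> bool}}|%:R.
Let sgn (s : {perm 'I_p}) : R := (-1) ^+ odd_perm s.

Let N_eq : N = M ^+ p.
Proof. by rewrite /N card_ffun card_ord natrX. Qed.

Let M_gt0 : 0 < M.
Proof. by rewrite ltr0n card_ffun expn_gt0 card_bool. Qed.

Let N_gt0 : 0 < N.
Proof. by rewrite N_eq exprn_gt0. Qed.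

Definition rad_chaos (s : {perm 'I_p}) (eta : {ffun 'I_p -> {ffun I -> bool}}) k : E k :=
  \sum_i (rsign R (eta k i) * rsign R (eta (s^-1 k)%g i)) *: d k i.

(* [projnorm] only uses representations with unit coefficients, so the
   coefficient -sgn(s)/#|eta| of each elementary tensor goes into factor k0. *)
Let scale (s : {perm 'I_p}) k : R := if k == k0 then - sgn s / N else 1.

Definition rad_tensors : seq (etuple E) :=
  [seq (fun k => scale s k *: rad_chaos s eta k) : etuple E
     | s <- enum [pred s : {perm 'I_p} | s != 1%g],
       eta <- enum {ffun 'I_p -> {ffun I -> bool}}].

Let sum_prod_chaos_coef (s : {perm 'I_p}) (g : {ffun 'I_p -> I}) :
  \sum_(eta : {ffun 'I_p -> {ffun I -> bool}})
     \prod_k (rsign R (eta k (g k)) * rsign R (eta (s^-1 k)%g (g k))) =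
  N * [forall j, g (s j) == g j]%:R.
Proof.
under eq_bigr => eta _.
  rewrite big_split /= [X in _ * X](reindex_inj (@perm_inj _ s)) /= -big_split.
  under eq_bigr => j _ do rewrite permK.
over.
rewrite sum_prod_rsign_pairs -N_eq (eq_forallb (fun j => eq_sym _ (g (s j)))).
by case: ifP; rewrite ?mulr1 ?mulr0.
Qed.

Let prod_scale (s : {perm 'I_p}) : \prod_k scale s k = - sgn s / N.
Proof. by rewrite (bigD1 k0) //= big1 ?mulr1 /scale ?eqxx // => k /negbTE->. Qed.

Let sum_rad_coef (g : {ffun 'I_p -> I}) :
  \sum_(s : {perm 'I_p} | s != 1%g) \sum_(eta : {ffun 'I_p -> {ffun I -> bool}})
     \prod_k (scale s k * (rsign R (eta k (g k)) * rsign R (eta (s^-1 k)%g (g k)))) =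
  1 - (injectiveb g)%:R.
Proof.
under eq_bigr => s _.
  under eq_bigr => eta _ do rewrite big_split /= prod_scale.
  rewrite -mulr_sumr sum_prod_chaos_coef mulrA divfK ?gt_eqF // mulNr.
over.
rewrite sumrN -(sum_sign_perm_invariant R g) [X in 1 - X](bigD1 1%g) /=; last first.
  by apply/forallP => j; rewrite perm1.
rewrite odd_perm1 expr0 opprD addrA subrr add0r big_mkcondl /=; congr (- _).
by apply: eq_bigr => s _; case: ifP; rewrite ?mulr1 ?mulr0.
Qed.

Lemma rad_tensors_repr :
  tensor_eq ((1, (fun k => \sum_i d k i) : etuple E) ::
             [seq (-1, (fun k => d k (g k)) : etuple E)
                | g : {ffun 'I_p -> I} <- enum [pred g : {ffun 'I_p -> I} | injectiveb g]])
            [seq (1, t) | t <- rad_tensors].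
Proof.
move=> phi phi_ml; rewrite big_cons !big_map big_allpairs_dep /= !big_enum /= mul1r.
have -> : phi (fun k => \sum_i d k i) = \sum_(g : {ffun 'I_p -> I}) phi (fun k => d k (g k)).
  rewrite -[LHS](congr1 phi (_ : (fun k => \sum_i 1 *: d k i) = _)); last first.
    by apply: functional_extensionality_dep => k; under eq_bigr do rewrite scale1r.
  rewrite (multilinear_expand phi_ml (fun _ _ => 1) d p_gt0); apply: eq_bigr => g _.
  by rewrite big1 ?mul1r.
have phi_t s eta : phi (fun k => scale s k *: rad_chaos s eta k) =
    \sum_(g : {ffun 'I_p -> I}) (\prod_k (scale s k *
      (rsign R (eta k (g k)) * rsign R (eta (s^-1 k)%g (g k))))) * phi (fun k => d k (g k)).
  rewrite -(multilinear_expand phi_ml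
    (fun k i => scale s k * (rsign R (eta k i) * rsign R (eta (s^-1 k)%g i))) d p_gt0).
  congr phi; apply: functional_extensionality_dep => k.
  by rewrite /rad_chaos scaler_sumr; apply: eq_bigr => i _; rewrite scalerA.
under [RHS]eq_bigr => s _ do under eq_bigr => eta _ do rewrite mul1r phi_t.
under [RHS]eq_bigr => s _ do rewrite big_enum /= exchange_big.
rewrite [RHS]exchange_big /=.
under [RHS]eq_bigr => g _ do under eq_bigr => s _ do rewrite -big_distrl /=.
under [RHS]eq_bigr => g _ do rewrite -big_distrl /= sum_rad_coef mulrBl mul1r.
rewrite sumrB; congr (_ + _); rewrite -sumrN big_mkcond /=.
by apply: eq_bigr => g _; rewrite inE; case: injectiveb; rewrite ?mulN1r ?mul1r ?mul0r ?oppr0.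
Qed.

Let S k := rad_moment (d k) p.

Lemma rad_chaos_fixed (s : {perm 'I_p}) eta k : s k = k -> rad_chaos s eta k = \sum_i d k i.
Proof.
move=> sk; have skV : (s^-1 k)%g = k by rewrite -{1}sk permK.
by apply: eq_bigr => i _; rewrite skV rsignM eqxx scale1r.
Qed.

Lemma rad_chaos_moment (s : {perm 'I_p}) k : s k != k ->
  N^-1 * \sum_(eta : {ffun 'I_p -> {ffun I -> bool}}) `|rad_chaos s eta k| ^+ p = S k ^+ p.
Proof.
move=> sk; have jk : (s^-1 k)%g != k by apply: contra sk => /eqP {1}<-; rewrite permKV.
under eq_bigr => eta _.
  rewrite (_ : rad_chaos s eta k =
    \sum_i rsign R ([ffun i => eta k i == eta (s^-1 k)%g i] i) *: d k i).
    over.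
  by apply: eq_bigr => i _; rewrite ffunE rsignM.
rewrite (sum_ffun_xnor (fun e => `|\sum_i rsign R (e i) *: d k i| ^+ p) jk) /S rad_momentXn //.
rewrite -/M N_eq -{1}(prednK p_gt0) exprS invfM mulrACA mulVf ?mulr1 //.
by rewrite expf_neq0 // gt_eqF.
Qed.

Let fixset_weight (A : {set 'I_p}) :=
  (\prod_(k in A) `|\sum_i d k i|) * \prod_(k in ~: A) S k.

Lemma mean_norm_rad_chaos (s : {perm 'I_p}) :
  N^-1 * \sum_(eta : {ffun 'I_p -> {ffun I -> bool}}) \prod_k `|rad_chaos s eta k| <=
  fixset_weight (fixset s).
Proof.
under eq_bigr => eta _.
  rewrite (bigID (mem (fixset s))) /=.
  rewrite (eq_bigr (fun k => `|\sum_i d k i|)); last first.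
    by move=> k; rewrite inE => /eqP sk; rewrite rad_chaos_fixed.
  rewrite [X in _ * X](eq_bigl (mem (~: fixset s))); last by move=> k; rewrite !inE.
over.
rewrite -mulr_sumr mulrCA ler_wpM2l ?prodr_ge0 //.
apply: mean_prod_le_prod_moments => //.
- by rewrite card_ffun expn_gt0 card_ffun expn_gt0 card_bool.
- by move=> k; apply: rad_moment_ge0.
- by move=> k; rewrite !inE => sk; apply: rad_chaos_moment.
Qed.

Lemma rad_tensors_cost :
  \sum_(t <- rad_tensors) \prod_k `|t k| <=
  \sum_(A : {set 'I_p} | (#|A| <= p - 2)%N)
     (\prod_(k in A) `|\sum_i d k i|) * (\prod_(k in ~: A) S k) * ((p - #|A|)`!)%:R.
Proof.
have prod_norm_scale s : \prod_k `|scale s k| = N^-1.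
  rewrite (bigD1 k0) //= big1 ?mulr1 => [|k /negbTE kk]; last by rewrite /scale kk normr1.
  rewrite /scale eqxx normrM normrN normrV ?unitfE ?gt_eqF // normrX normrN1 expr1n mul1r.
  by rewrite gtr0_norm.
rewrite big_allpairs_dep /= big_enum /=.
have weight_ge0 A : 0 <= fixset_weight A.
  by rewrite mulr_ge0 ?prodr_ge0 // => k _; apply: rad_moment_ge0.
apply: le_trans _ (sum_nontrivial_perm_fixset _ weight_ge0).
rewrite (eq_bigl (fun s => s != 1%g)) //; apply: ler_sum => s _.
apply: le_trans (mean_norm_rad_chaos s); rewrite big_enum /= mulr_sumr.
apply: ler_sum => eta _; rewrite -(prod_norm_scale s) -big_split /=.
by under eq_bigr do rewrite normrZ.
Qed.

End RademacherRepresentation.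

Theorem theorem5p1 (R : realType) (p : nat) (E : 'I_p -> completeNormedModType R)
  (I : finType) (d : forall k : 'I_p, I -> E k) :
  (2 <= p)%N ->
  let f := fun k : 'I_p => \sum_(i : I) d k i in
  let S := fun k : 'I_p => rad_moment (d k) p in
  projnorm ((1, (fun k : 'I_p => f k) : etuple E) ::
            [seq (-1, (fun k : 'I_p => d k (g k)) : etuple E)
               | g : {ffun 'I_p -> I} <- enum [pred g : {ffun 'I_p -> I} | injectiveb g]])
  <= \sum_(A : {set 'I_p} | (#|A| <= p - 2)%N)
       (\prod_(k in A) `|f k|) * (\prod_(k in ~: A) S k) * ((p - #|A|)`!)%:R.
Proof.
move=> p_ge2 /=.
exact: le_trans (projnorm_le (rad_tensors_repr d p_ge2)) (rad_tensors_cost d p_ge2).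
Qed.
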